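(* Let $n=2^s$, $q=2^r$ ($s,r$ positive integers). The dual code $C^{\perp}(SL(n,q))$ of the binary code $C(SL(n,q))$ is \[ C^{\perp}(SL(n,q))=\{c(a)=(tr(a\,Tr(g_1)),tr(a\,Tr(g_2)),\dots,tr(a\,Tr(g_N))) : a\in\mathbb{F}_q\}. \]
   Context: $\mathbb{F}_q$ is the field with $q$ elements and $tr:\mathbb{F}_q\to\mathbb{F}_2$ the absolute trace. $N=|SL(n,q)|$, $g_1,\dots,g_N$ is a fixed ordering of $SL(n,q)$, $Tr$ is the matrix trace, $v=(Tr(g_1),\dots,Tr(g_N))\in\mathbb{F}_q^N$, and $C(SL(n,q))=\{u\in\mathbb{F}_2^N: u\cdot v=0\}$ (dot product in $\mathbb{F}_q$); the dual is taken in $\mathbb{F}_2^N$ with respect to the standard inner product. *)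

From HB Require Import structures.
From mathcomp Require Import all_boot all_order all_algebra.
Set Implicit Arguments. Unset Strict Implicit. Unset Printing Implicit Defensive.
Import GRing.Theory.
Local Open Scope ring_scope.

Definition SLn (F : finFieldType) (n : nat) := {A : 'M[F]_n | \det A == 1}.

(* Absolute trace F_q -> F_2 for q = 2^r: tr x = x + x^2 + ... + x^(2^(r-1)),
   which lies in {0,1} \subset F_q; we read it as an element of 'F_2. *)
Definition abs_trace (F : finFieldType) (r : nat) (x : F) : 'F_2 :=
  if \sum_(i < r) x ^+ (2 ^ i) == 0 then 0 else 1.

Definition word (F : finFieldType) (n : nat) := {ffun SLn F n -> 'F_2}.

Definition F2_to_F (F : finFieldType) (b : 'F_2) : F := (nat_of_ord b)%:R.

Definition codeC (F : finFieldType) (n : nat) : {set word F n} :=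
  [set u : word F n | \sum_(g : SLn F n) @F2_to_F F (u g) * \tr (val g) == 0].

Definition dual_code (F : finFieldType) (n : nat) (C : {set word F n})
  : {set word F n} :=
  [set w : word F n | [forall u in C, \sum_(g : SLn F n) u g * w g == 0]].

Definition cword (F : finFieldType) (n r : nat) (a : F) : word F n :=
  [ffun g : SLn F n => abs_trace r (a * \tr (val g))].

From mathcomp Require Import all_boot all_order all_algebra all_field.
Set Implicit Arguments. Unset Strict Implicit. Unset Printing Implicit Defensive.
Import GRing.Theory.
Local Open Scope ring_scope.

(* The code C(SL(n,q)) is the kernel of the F_2-linear map u |-> sum_g u_g Tr(g)
   from F_2^N to F_q, so its dual consists of the words g |-> lam (Tr g) with
   lam : F_q -> F_2 additive.  Concretely, a word orthogonal to C is constant on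
   the fibres of Tr and additive along traces: test it against the words with
   support {g, h} (Tr g = Tr h) and {g, h, k} (Tr g + Tr h = Tr k), which lie in C
   because q is even; since n >= 2 every element of F_q is the trace of some g.
   Finally the trace form (a, x) |-> tr(a x) is nondegenerate, so counting shows
   that every additive lam : F_q -> F_2 is x |-> tr(a x) for some a. *)

Lemma F2_0or1 (b : 'F_2) : b = 0 \/ b = 1.
Proof. by case: b => [[|[|k]] lt_b2] //; [left | right]; apply: val_inj. Qed.

Lemma F2_to_F_inj (F : finFieldType) : injective (F2_to_F F).
Proof.
move=> b c; case: (F2_0or1 b) => ->; case: (F2_0or1 c) => -> //= /eqP.
  by rewrite eq_sym oner_eq0.
by rewrite oner_eq0.
Qed.

Lemma sum_count_mem (R : pzSemiRingType) (T : finType) (l : seq T) (f : T -> R) :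
  \sum_g (count_mem g l)%:R * f g = \sum_(k <- l) f k.
Proof.
elim: l => [|k l IHl]; first by rewrite big_nil big1 // => g _; rewrite mul0r.
rewrite big_cons -IHl (bigD1 k) //= [in RHS](bigD1 k) //= eqxx addrA.
congr (_ + _); first by rewrite natrD mulrDl mul1r.
by apply: eq_bigr => g; rewrite eq_sym => /negbTE ->.
Qed.

Section CharTwo.

Variable F : finFieldType.
Hypothesis charF2 : 2 \in [pchar F].

Lemma F2_to_F_natr n : F2_to_F F n%:R = n%:R.
Proof. by rewrite /F2_to_F val_Fp_nat // GRing.natr_mod_pchar. Qed.

Lemma F2_to_FD : {morph F2_to_F F : b c / b + c}.
Proof. by move=> b c; rewrite -[b]natr_Zp -[c]natr_Zp -natrD !F2_to_F_natr natrD. Qed.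

Definition count_word n (l : seq (SLn F n)) : word F n := [ffun g => (count_mem g l)%:R].

Lemma count_word_codeC n (l : seq (SLn F n)) :
  (count_word l \in codeC F n) = (\sum_(g <- l) \tr (val g) == 0).
Proof.
rewrite inE -[X in _ = (X == 0)]sum_count_mem; congr (_ == 0); apply: eq_bigr => g _.
by rewrite ffunE F2_to_F_natr.
Qed.

Lemma dual_codeC_sum n w (l : seq (SLn F n)) : w \in dual_code (codeC F n) ->
  \sum_(g <- l) \tr (val g) = 0 -> \sum_(g <- l) w g = 0.
Proof.
rewrite inE => /forallP/(_ (count_word l)) + tr_l.
rewrite count_word_codeC tr_l eqxx /= => /eqP w_orth.
rewrite -[RHS]w_orth -[LHS]sum_count_mem.
by apply: eq_bigr => g _; rewrite ffunE.
Qed.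

End CharTwo.

Section AdditiveDuality.

Variables (F : finFieldType) (p : nat).
Hypothesis charFp : p \in [pchar F].
Local Notation V := (pPrimeCharType charFp).

Lemma additive_scale (f : V -> 'F_p) : {morph f : x y / x + y} ->
  forall (c : 'F_p) x, f (c *: x) = c * f x.
Proof.
move=> fD c x; have f0 : f 0 = 0 by apply: (addrI (f 0)); rewrite -fD !addr0.
have fMn n : f (x *+ n) = f x *+ n by elim: n => [|n IHn]; rewrite ?mulrS ?fD ?IHn.
by rewrite -[c in RHS]natr_Zp mulr_natl -fMn -mulr_natl.
Qed.

Let B := vbasis {:V}.

Lemma additive_basis_expansion (f : V -> 'F_p) : {morph f : x y / x + y} ->
  forall x, f x = \sum_(i < \dim {:V}) coord B i x * f B`_i.
Proof.
move=> fD x; have f0 : f 0 = 0 by apply: (addrI (f 0)); rewrite -fD !addr0.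
rewrite {1}(coord_vbasis (memvf x)) (big_morph f fD f0).
by apply: eq_bigr => i _; rewrite additive_scale.
Qed.

Lemma additive_functional_dual (t : F -> 'F_p) :
    {morph t : x y / x + y} -> (forall a, (forall x, t (a * x) = 0) -> a = 0) ->
  forall lam : F -> 'F_p, {morph lam : x y / x + y} ->
  exists a, forall x, lam x = t (a * x).
Proof.
move=> tD t_nondeg lam lamD.
have tMD a : {morph (fun x => t (a * x)) : x y / x + y}.
  by move=> x y; rewrite /= mulrDr tD.
pose coef (f : F -> 'F_p) := [ffun i : 'I_(\dim {:V}) => f B`_i].
have coef_inj : injective (fun a => coef (fun x => t (a * x))).
  move=> a b /ffunP eq_ab; apply/eqP; rewrite -subr_eq0; apply/eqP/t_nondeg => x.
  apply: (addIr (t (b * x))); rewrite -tD -mulrDl subrK add0r.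
  rewrite (additive_basis_expansion (tMD a)) (additive_basis_expansion (tMD b)).
  by apply: eq_bigr => i _; have := eq_ab i; rewrite !ffunE => ->.
have cardF : #|F| = #|{ffun 'I_(\dim {:V}) -> 'F_p}|.
  rewrite card_ffun card_ord.
  have := card_vspace (fullv : {vspace V}); rewrite card_vspacef => ->.
  by rewrite card_ord (card_ord (\dim _)).
have coef_onto : [set coef (fun x => t (a * x)) | a : F] = setT.
  by apply/eqP; rewrite eqEcard subsetT cardsT card_imset // -cardF leqnn.
have /imsetP[a _ lam_a] : coef lam \in [set coef (fun x => t (a * x)) | a : F].
  by rewrite coef_onto inE.
exists a => x; rewrite (additive_basis_expansion lamD) (additive_basis_expansion (tMD a)).
by apply: eq_bigr => i _; move/ffunP: lam_a => /(_ i); rewrite !ffunE => ->.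
Qed.

End AdditiveDuality.

Definition companion2 (R : comPzRingType) (y : R) : 'M[R]_2 :=
  \matrix_(i, j) nth 0 (nth [::] [:: [:: y; -1]; [:: 1; 0]] i) j.

Lemma det_companion2 (R : comPzRingType) (y : R) : \det (companion2 y) = 1.
Proof.
rewrite (expand_det_row _ 0) !big_ord_recl big_ord0 /cofactor !det_mx11 !mxE /=.
by rewrite !mulr0 add0r addr0 mulr1 mulN1r expr1 opprK.
Qed.

Lemma trace_companion2 (R : comPzRingType) (y : R) : \tr (companion2 y) = y.
Proof. by rewrite /mxtrace !big_ord_recl big_ord0 !mxE /= !addr0. Qed.

Definition sl_mx_of_trace (R : comPzRingType) m (x : R) : 'M[R]_(2 + m) :=
  block_mx (companion2 (x - m%:R)) 0 0 1%:M.

Lemma det_sl_mx_of_trace (R : comPzRingType) m (x : R) : \det (sl_mx_of_trace m x) = 1.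
Proof. by rewrite det_ublock det_companion2 det1 mulr1. Qed.

Lemma trace_sl_mx_of_trace (R : comPzRingType) m (x : R) : \tr (sl_mx_of_trace m x) = x.
Proof. by rewrite mxtrace_block trace_companion2 mxtrace1 subrK. Qed.

Section TraceCode.

Variables (F : finFieldType) (r : nat).
Hypotheses (cardF : #|F| = (2 ^ r)%N) (r_gt0 : (0 < r)%N).

Let charF2 : 2 \in [pchar F] := card_finPcharP cardF (isT : prime 2).

Definition abs_traceF (x : F) : F := \sum_(i < r) x ^+ (2 ^ i).

Lemma abs_traceFD : {morph abs_traceF : x y / x + y}.
Proof.
move=> x y; rewrite -big_split; apply: eq_bigr => i _.
by rewrite exprDn_pchar // pnatX pnatE ?charF2.
Qed.

Lemma abs_traceF_idem x : abs_traceF x ^+ 2 = abs_traceF x.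
Proof.
rewrite -(pFrobenius_autE charF2) rmorph_sum /abs_traceF /=.
case: r cardF r_gt0 => // r' cardF' _.
rewrite big_ord_recr big_ord_recl /= pFrobenius_autE -exprM -expnSr -cardF'.
rewrite expf_card addrC; congr (_ + _); apply: eq_bigr => i _.
by rewrite pFrobenius_autE -exprM -expnSr.
Qed.

Lemma abs_traceF_0or1 x : abs_traceF x = 0 \/ abs_traceF x = 1.
Proof.
have /eqP := abs_traceF_idem x.
rewrite expr2 -subr_eq0 -[X in _ - X]mulr1 -mulrBr mulf_eq0 subr_eq0.
by case/orP=> /eqP ->; [left | right].
Qed.

Lemma F2_to_F_abs_trace x : F2_to_F F (abs_trace r x) = abs_traceF x.
Proof.
rewrite /abs_trace -/(abs_traceF x).
by case: (abs_traceF_0or1 x) => ->; rewrite ?eqxx ?oner_eq0.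
Qed.

Lemma abs_traceD : {morph @abs_trace F r : x y / x + y}.
Proof.
move=> x y; apply: (@F2_to_F_inj F).
by rewrite (F2_to_FD charF2) !F2_to_F_abs_trace abs_traceFD.
Qed.

Lemma abs_trace0 : abs_trace r (0 : F) = 0.
Proof. by apply/esym/(addrI (abs_trace r (0 : F))); rewrite -abs_traceD !addr0. Qed.

Lemma abs_traceF_neq0 : exists y, abs_traceF y != 0.
Proof.
pose P : {poly F} := \sum_(i < r) 'X^(2 ^ i).
have P_horner x : P.[x] = abs_traceF x.
  by rewrite horner_sum; apply: eq_bigr => i _; rewrite hornerXn.
have P_neq0 : P != 0.
  apply/eqP => /(congr1 (fun q : {poly F} => q`_1)).
  rewrite coef0 coef_sum; case: r r_gt0 => // r' _.
  rewrite big_ord_recl big1 => [|i _].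
    by rewrite coefXn addr0 => /eqP; rewrite oner_eq0.
  by rewrite coefXn -[in 1%N](expn0 2) eqn_exp2l.
have size_P : (size P <= #|F|)%N.
  rewrite cardF; apply: leq_trans (size_sum _ _ _) _; apply/bigmax_leqP => i _.
  by rewrite size_polyXn ltn_exp2l.
suff /existsP[y ?] : [exists y, abs_traceF y != 0] by exists y.
apply: contraLR size_P; rewrite negb_exists -ltnNge => /forallP Ptr0.
rewrite cardE; apply: max_poly_roots P_neq0 _ (enum_uniq F).
by apply/allP => x _; rewrite /root P_horner; apply: negbNE.
Qed.

Lemma abs_trace_nondeg (a : F) : (forall x, abs_trace r (a * x) = 0) -> a = 0.
Proof.
move=> tr_a0; apply/eqP; apply: contraT => a_neq0.
have [y] := abs_traceF_neq0.
by rewrite -F2_to_F_abs_trace -[y](mulVKf a_neq0) tr_a0 eqxx.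
Qed.

Lemma cword_dual_codeC n a : cword n r a \in dual_code (codeC F n).
Proof.
rewrite inE; apply/forall_inP => u; rewrite inE => /eqP u_C.
have scale_abs_trace (b : 'F_2) x : b * abs_trace r x = abs_trace r (F2_to_F F b * x).
  by case: (F2_0or1 b) => ->; rewrite ?mul0r ?mul1r // abs_trace0.
under eq_bigr do rewrite ffunE scale_abs_trace mulrCA.
by rewrite -(big_morph _ abs_traceD abs_trace0) -mulr_sumr u_C mulr0 abs_trace0.
Qed.

Lemma dual_codeC_sub_cwords m w : w \in dual_code (codeC F m.+2) ->
  w \in [set cword m.+2 r a | a : F].
Proof.
move=> w_dual.
pose sl x : SLn F m.+2 :=
  exist _ (sl_mx_of_trace m x) (introT eqP (det_sl_mx_of_trace m x)).
have tr_sl x : \tr (val (sl x)) = x := trace_sl_mx_of_trace m x.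
have F2_eq (b c : 'F_2) : b + c = 0 -> b = c.
  by move/eqP; rewrite addr_eq0 (oppr_pchar2 (pchar_Fp (isT : prime 2))) => /eqP.
pose lam x := w (sl x).
have w_lam g : w g = lam (\tr (val g)).
  apply: F2_eq; have := dual_codeC_sum charF2 (l := [:: g; sl (\tr (val g))]) w_dual.
  by rewrite !big_cons !big_nil !addr0 tr_sl addrr_pchar2 // => /(_ erefl).
have lamD : {morph lam : x y / x + y}.
  move=> x y; apply/esym/F2_eq.
  have := dual_codeC_sum charF2 (l := [:: sl x; sl y; sl (x + y)]) w_dual.
  by rewrite !big_cons !big_nil !addr0 !tr_sl addrA addrr_pchar2 // addrA => /(_ erefl).
have [a lam_a] := additive_functional_dual charF2 abs_traceD abs_trace_nondeg lamD.
by apply/imsetP; exists a => //; apply/ffunP => g; rewrite ffunE w_lam lam_a.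
Qed.

Lemma dual_codeC_eq m : dual_code (codeC F m.+2) = [set cword m.+2 r a | a : F].
Proof.
apply/setP => w; apply/idP/idP => [/dual_codeC_sub_cwords // | /imsetP[a _ ->]].
exact: cword_dual_codeC.
Qed.

End TraceCode.

Theorem proposition4 (s r : nat) (F : finFieldType) :
  (0 < s)%N -> (0 < r)%N -> #|F| = (2 ^ r)%N ->
  dual_code (codeC F (2 ^ s)) = [set cword (2 ^ s) r a | a : F].
Proof.
move=> s_gt0 r_gt0 cardF.
have : (2 <= 2 ^ s)%N by rewrite -{1}(expn1 2) leq_exp2l.
by case: (2 ^ s)%N => [|[|m]] // _; apply: dual_codeC_eq.
Qed.
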